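(* Assume $r\ge2$, let $F:(\mathbb{R}^n,D)\to(\mathbb{R}^n,D)$ be an $\eta$-quasisymmetric homeomorphism, and write $F(x,y)=(H(x,y),G(y))$ for $x\in\mathbb{R}^{n_1}$, $y\in Y$ (such maps exist since $F$ maps each horizontal leaf $\mathbb{R}^{n_1}\times\{y\}$ onto a horizontal leaf). Suppose there are constants $K\ge1$ and $C>0$ such that (1) $G:(Y,D_Y)\to(Y,D_Y)$ is a $K$-quasisimilarity with constant $C$, and (2) for each $y\in Y$, $H(\cdot,y):\mathbb{R}^{n_1}\to\mathbb{R}^{n_1}$ (Euclidean metric) is a $K$-quasisimilarity with constant $C$. Then $F$ is an $(\eta(1)/\eta^{-1}(1))K$-quasisimilarity (with respect to $D$) with constant $C$.
   Context: Let $n_1,\dots,n_r\ge1$, $n=n_1+\dots+n_r$, $0<\alpha_1<\dots<\alpha_r$. For $x=(x_1,\dots,x_r)\in\mathbb{R}^n=\mathbb{R}^{n_1}\times\dots\times\mathbb{R}^{n_r}$, $D(x,y)=\max\{|x_1-y_1|,|x_2-y_2|^{\alpha_1/\alpha_2},\dots,|x_r-y_r|^{\alpha_1/\alpha_r}\}$. $Y=\mathbb{R}^{n_2}\times\dots\times\mathbb{R}^{n_r}$, $\mathbb{R}^n=\mathbb{R}^{n_1}\times Y$, $D_Y((x_2,\dots,x_r),(x_2',\dots,x_r'))=\max_{2\le i\le r}|x_i-x_i'|^{\alpha_1/\alpha_i}$. $\eta:[0,\infty)\to[0,\infty)$ is a homeomorphism; $f$ is $\eta$-quasisymmetric if $\frac{d(f(x),f(y))}{d(f(x),f(z))}\le\eta(\frac{d(x,y)}{d(x,z)})$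 for distinct $x,y,z$. A bijection $\Phi$ is a $K$-quasisimilarity with constant $C>0$ if $\frac CK d(a,b)\le d(\Phi(a),\Phi(b))\le CK\,d(a,b)$ for all $a,b$. *)

From HB Require Import structures.
From mathcomp Require Import all_boot all_order all_algebra.
From mathcomp Require Import all_classical all_reals all_analysis.
Set Implicit Arguments. Unset Strict Implicit. Unset Printing Implicit Defensive.
Import Order.TTheory GRing.Theory Num.Theory.
Import numFieldNormedType.Exports.
Local Open Scope ring_scope.
Local Open Scope classical_set_scope.

Section Defs.
Variable R : realType.

Definition enorm (m : nat) (v : 'rV[R]_m) : R := Num.sqrt (\sum_(j < m) v 0 j ^+ 2).

(* A point of R^n = R^{n_1} x ... x R^{n_r}; block i (0-based) lives in R^{ns i} *)
Definition Pt (r : nat) (ns : nat -> nat) := forall i : 'I_r, 'rV[R]_(ns i).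

(* A point of Y = R^{n_2} x ... x R^{n_r}: block j (0-based) is block j+1 of R^n *)
Definition Ypt (r : nat) (ns : nat -> nat) := forall j : 'I_r.-1, 'rV[R]_(ns j.+1).

Lemma ltn_tail (r : nat) (j : 'I_r.-1) : (j.+1 < r)%N.
Proof. by case: r j => [|r] [j hj]. Qed.

Definition tail (r : nat) (ns : nat -> nat) (p : Pt r ns) : Ypt r ns :=
  fun j => p (Ordinal (ltn_tail j)).

(* D(x,y) = max_i |x_i - y_i|^(alpha_1/alpha_i)  (alpha indexed from 0 here) *)
Definition Dist (r : nat) (ns : nat -> nat) (alpha : nat -> R) (p q : Pt r ns) : R :=
  \big[Num.max/0]_(i < r) (enorm (p i - q i)) `^ (alpha 0%N / alpha i).

Definition DistY (r : nat) (ns : nat -> nat) (alpha : nat -> R) (p q : Ypt r ns) : R :=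
  \big[Num.max/0]_(j < r.-1) (enorm (p j - q j)) `^ (alpha 0%N / alpha j.+1).

Definition homeo_halfline (eta : R -> R) : Prop :=
  exists g : R -> R,
    (forall t, 0 <= t -> [/\ 0 <= eta t, 0 <= g t, g (eta t) = t & eta (g t) = t])
    /\ {within [set t : R | 0 <= t], continuous eta}
    /\ {within [set t : R | 0 <= t], continuous g}.

Definition dcontinuous (T : Type) (d : T -> T -> R) (f : T -> T) : Prop :=
  forall x e, 0 < e -> exists2 del, 0 < del & forall y, d x y < del -> d (f x) (f y) < e.

Definition dhomeo (T : Type) (d : T -> T -> R) (f : T -> T) : Prop :=
  exists g : T -> T, [/\ cancel f g, cancel g f, dcontinuous d f & dcontinuous d g].

Definition quasisymmetric (T : Type) (d : T -> T -> R) (eta : R -> R) (f : T -> T) : Prop :=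
  forall x y z : T, x <> y -> x <> z -> y <> z ->
    d (f x) (f y) / d (f x) (f z) <= eta (d x y / d x z).

Definition quasisimilarity (T : Type) (d : T -> T -> R) (K C : R) (f : T -> T) : Prop :=
  bijective f /\
  forall a b : T, C / K * d a b <= d (f a) (f b) /\ d (f a) (f b) <= C * K * d a b.

End Defs.

From HB Require Import structures.
From mathcomp Require Import all_boot all_order all_algebra.
From mathcomp Require Import all_classical all_reals all_analysis.
From mathcomp Require Import ring lra.
Set Implicit Arguments. Unset Strict Implicit. Unset Printing Implicit Defensive.
Import Order.TTheory GRing.Theory Num.Theory.
Local Open Scope ring_scope.

(* Let t1 = eta^-1(1).  Through every point a runs a horizontal leaf on which
   F is a K-quasisimilarity with constant C, and that leaf contains points w at
   any prescribed distance from a, avoiding any given point.  Quasisymmetry at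
   the ratio t1 compares b with a leaf point w: taking D(a,w) = t1 D(a,b) gives
   D(Fa,Fw) <= D(Fa,Fb), hence D(Fa,Fb) >= (C/K) t1 D(a,b); taking
   D(a,w) = D(a,b)/t1 gives D(Fa,Fb) <= D(Fa,Fw) <= CK/t1 D(a,b).  Comparing two
   leaf points at distance 1 from a shows eta(1) >= 1; the same comparison shows
   eta > 0 on (0,oo), so the zero of eta is 0 and t1 > 0. *)

Section QuasisymmetryOnRichLeaves.
Variables (R : realType) (T : Type) (d : T -> T -> R) (eta : R -> R) (f : T -> T).
Variables (K C : R).
Hypothesis d_xx : forall x, d x x = 0.
Hypothesis d_gt0 : forall x y, x <> y -> 0 < d x y.
Hypothesis f_qs : quasisymmetric d eta f.
Hypotheses (K_gt0 : 0 < K) (C_gt0 : 0 < C).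
Hypothesis rich_leaves : forall p q s, 0 < s -> exists2 w, w <> q &
  d p w = s /\ C / K * s <= d (f p) (f w) <= C * K * s.

Lemma d_ge0 x y : 0 <= d x y.
Proof. by have [->|/d_gt0/ltW] := pselect (x = y); rewrite ?d_xx. Qed.

Lemma rich_point p q s : 0 < s -> exists w, [/\ w <> p, w <> q, d p w = s &
  C / K * s <= d (f p) (f w) <= C * K * s].
Proof.
move=> s_gt0; have [w wq [dw bw]] := rich_leaves p q s_gt0.
exists w; split=> // wp; by move: s_gt0; rewrite -dw wp d_xx ltxx.
Qed.

Section Injective.
Hypothesis f_inj : injective f.

Lemma d_f_gt0 x y : x <> y -> 0 < d (f x) (f y).
Proof. by move=> xy; apply: d_gt0 => /f_inj. Qed.

Lemma quasisymmetric_eta_gt0 t : T -> 0 < t -> 0 < eta t.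
Proof.
move=> p t_gt0.
have [w1 [w1p _ dw1 _]] := rich_point p p t_gt0.
have [w2 [w2p w21 dw2 _]] := rich_point p w1 ltr01.
have := f_qs (nesym w1p) (nesym w2p) (nesym w21).
rewrite dw1 dw2 divr1; apply: lt_le_trans.
by rewrite divr_gt0 // d_f_gt0 // => /esym.
Qed.

Lemma quasisymmetric_eta0 : T -> homeo_halfline eta -> eta 0 = 0.
Proof.
move=> p [g [g_inv _]]; have [_ g0_ge0 _ eta_g0] := g_inv 0 (lexx 0).
have [g0_eq0|g0_neq0] := eqVneq (g 0) 0; first by rewrite -{1}g0_eq0.
have g0_gt0 : 0 < g 0 by rewrite lt_neqAle eq_sym g0_neq0.
by have := quasisymmetric_eta_gt0 p g0_gt0; rewrite eta_g0 ltxx.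
Qed.

Lemma quasisymmetric_eta1_ge1 : T -> 1 <= eta 1.
Proof.
move=> p.
have [w1 [w1p _ dw1 _]] := rich_point p p ltr01.
have [w2 [w2p w21 dw2 _]] := rich_point p w1 ltr01.
have d1_gt0 := d_f_gt0 (nesym w1p); have d2_gt0 := d_f_gt0 (nesym w2p).
have q12 := f_qs (nesym w1p) (nesym w2p) (nesym w21).
have q21 := f_qs (nesym w2p) (nesym w1p) w21.
rewrite dw1 dw2 divr1 in q12 q21.
have [d12|d21] := leP (d (f p) (f w1)) (d (f p) (f w2)).
  by apply: le_trans q21; rewrite ler_pdivlMr // mul1r.
by apply: le_trans q12; rewrite ler_pdivlMr // mul1r ltW.
Qed.

Section NormalizedAtOne.
Variable t1 : R.
Hypotheses (t1_gt0 : 0 < t1) (eta_t1 : eta t1 = 1).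

Lemma dist_image_ge a b : C / K * t1 * d a b <= d (f a) (f b).
Proof.
have [<-|ab] := pselect (a = b); first by rewrite !d_xx mulr0.
have ab_gt0 := d_gt0 ab.
have [w [wa wb dw bw]] := rich_point a b (mulr_gt0 t1_gt0 ab_gt0).
have := f_qs (nesym wa) ab wb.
rewrite dw mulrK ?unitf_gt0 // eta_t1 ler_pdivrMr ?d_f_gt0 // mul1r.
by apply: le_trans; rewrite -mulrA; case/andP: bw.
Qed.

Lemma dist_image_le a b : d (f a) (f b) <= C * K / t1 * d a b.
Proof.
have [<-|ab] := pselect (a = b); first by rewrite !d_xx mulr0.
have ab_gt0 := d_gt0 ab.
have [w [wa wb dw bw]] := rich_point a b (divr_gt0 ab_gt0 t1_gt0).
have ratio : d a b / d a w = t1.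
  by rewrite dw invf_div mulrCA divff ?mulr1 ?gt_eqF.
have := f_qs ab (nesym wa) (nesym wb).
rewrite ratio eta_t1 ler_pdivrMr ?(d_f_gt0 (nesym wa)) // mul1r => /le_trans; apply.
by rewrite mulrAC -mulrA; case/andP: bw.
Qed.

End NormalizedAtOne.

End Injective.

Lemma quasisimilarity_of_rich_leaves t1 :
  homeo_halfline eta -> bijective f -> 0 <= t1 -> eta t1 = 1 ->
  quasisimilarity d (eta 1 / t1 * K) C f.
Proof.
move=> eta_homeo f_bij t1_ge0 eta_t1; split=> // a b.
have f_inj := bij_inj f_bij.
have t1_gt0 : 0 < t1.
  rewrite lt_neqAle t1_ge0 andbT; apply/eqP => t1_eq0; move: eta_t1.
  by rewrite -t1_eq0 (quasisymmetric_eta0 f_inj a eta_homeo) => /eqP; rewrite eq_sym oner_eq0.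
have eta1_ge1 := quasisymmetric_eta1_ge1 f_inj a.
have eta1_gt0 : 0 < eta 1 := lt_le_trans ltr01 eta1_ge1.
have dab_ge0 := d_ge0 a b.
split.
- apply: le_trans (dist_image_ge f_inj t1_gt0 eta_t1 a b).
  have -> : C / (eta 1 / t1 * K) * d a b = C / K * t1 * d a b / eta 1.
    by field; rewrite !gt_eqF.
  by rewrite ler_pdivrMr // ler_peMr // !mulr_ge0 ?invr_ge0 // ltW.
- apply: le_trans (dist_image_le f_inj t1_gt0 eta_t1 a b) _.
  have -> : C * (eta 1 / t1 * K) * d a b = C * K / t1 * d a b * eta 1.
    by field; rewrite gt_eqF.
  by rewrite ler_peMr // !mulr_ge0 ?invr_ge0 // ltW.
Qed.

End QuasisymmetryOnRichLeaves.

Section EuclideanNorm.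
Variables (R : realType) (m : nat).
Implicit Type v : 'rV[R]_m.

Lemma enorm_ge0 v : 0 <= enorm v.
Proof. exact: sqrtr_ge0. Qed.

Lemma enorm0 : enorm (0 : 'rV[R]_m) = 0.
Proof. by rewrite /enorm big1 ?sqrtr0 // => j _; rewrite mxE expr0n. Qed.

Lemma enormN v : enorm (- v) = enorm v.
Proof. by rewrite /enorm; congr Num.sqrt; apply: eq_bigr => j _; rewrite mxE sqrrN. Qed.

Lemma enormZ (c : R) v : enorm (c *: v) = `|c| * enorm v.
Proof.
rewrite /enorm -sqrtr_sqr -sqrtrM ?sqr_ge0 // mulr_sumr.
by congr Num.sqrt; apply: eq_bigr => j _; rewrite mxE exprMn.
Qed.

Lemma enorm_eq0 v : (enorm v == 0) = (v == 0).
Proof.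
apply/idP/eqP => [|->]; last by rewrite enorm0.
rewrite sqrtr_eq0 => sum_le0; apply/matrixP => i j; rewrite ord1 mxE.
have sum_eq0 : \sum_(k < m) v 0 k ^+ 2 = 0.
  by apply: le_anti; rewrite sum_le0 sumr_ge0 // => k _; rewrite sqr_ge0.
by apply/eqP; rewrite -sqrf_eq0 (psumr_eq0P _ sum_eq0) // => k _; rewrite sqr_ge0.
Qed.

Definition first_unit : 'rV[R]_m := \row_(j < m) (j == 0 :> nat)%:R.

Lemma enorm_first_unit : (0 < m)%N -> enorm first_unit = 1.
Proof.
rewrite /enorm /first_unit; case: m => [//|k] _; rewrite big_ord_recl big1 ?addr0.
  by rewrite mxE /= expr1n sqrtr1.
by move=> j _; rewrite mxE /= expr0n.
Qed.

End EuclideanNorm.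

Section HorizontalLeaves.
Variables (R : realType) (r : nat) (ns : nat -> nat) (alpha : nat -> R).
Variable r_gt0 : (0 < r)%N.
Hypothesis alpha_gt0 : forall i : 'I_r, 0 < alpha i.
Hypothesis ns0_gt0 : (0 < ns 0)%N.
Local Notation point := (Pt R r ns).

Definition block0 : 'I_r := Ordinal r_gt0.

Lemma Dist_exponent_neq0 (i : 'I_r) : alpha 0 / alpha i != 0.
Proof. by rewrite mulf_neq0 ?invr_eq0 ?gt_eqF // (alpha_gt0 block0). Qed.

Lemma Dist_xx (a : point) : Dist alpha a a = 0.
Proof.
rewrite /Dist; elim/big_ind: _ => [//|x y -> ->|i _]; first exact: maxxx.
by rewrite subrr enorm0 powR0 ?Dist_exponent_neq0.
Qed.

Lemma Dist_gt0 (a b : point) : a <> b -> 0 < Dist alpha a b.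
Proof.
move=> ab; have /existsNP [i abi] : ~ (forall i, a i = b i).
  by move=> a_eq_b; apply: ab; apply: functional_extensionality_dep.
apply: lt_le_trans (le_bigmax _ _ i); apply: powR_gt0.
by rewrite lt_neqAle enorm_ge0 andbT eq_sym enorm_eq0 subr_eq0; apply/eqP.
Qed.

Lemma tail_eq_block (a b : point) :
  tail a = tail b -> forall i : 'I_r, i != block0 -> a i = b i.
Proof.
move=> same_tail [[|k] k_lt] i_neq0.
  by move: i_neq0; rewrite -val_eqE.
have k_lt' : (k < r.-1)%N by rewrite -subn1 ltn_subRL add1n.
have := congr1 (fun t => t (Ordinal k_lt')) same_tail; rewrite /tail /=.
by rewrite (bool_irrelevance (ltn_tail (Ordinal k_lt')) k_lt).
Qed.

Lemma Dist_same_tail (a b : point) :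
  tail a = tail b -> Dist alpha a b = enorm (a block0 - b block0).
Proof.
move=> same_tail.
have block0_term : enorm (a block0 - b block0) `^ (alpha 0 / alpha block0)
    = enorm (a block0 - b block0).
  by rewrite /= divff ?powRr1 ?enorm_ge0 ?gt_eqF ?(alpha_gt0 block0).
apply: le_anti; apply/andP; split; last by rewrite -{1}block0_term le_bigmax.
apply: bigmax_le; first exact: enorm_ge0.
move=> i _; have [->|i_neq0] := eqVneq i block0; first by rewrite block0_term.
by rewrite (tail_eq_block same_tail i_neq0) subrr enorm0 powR0 ?Dist_exponent_neq0 ?enorm_ge0.
Qed.

Definition leaf_shift (p : point) (c : R) : point :=
  fun i => p i + (if i == block0 then c else 0) *: first_unit R (ns i).

Lemma tail_leaf_shift p c : tail (leaf_shift p c) = tail p.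
Proof.
apply: functional_extensionality_dep => j.
by rewrite /tail /leaf_shift -val_eqE /= scale0r addr0.
Qed.

Lemma leaf_shift0 p : leaf_shift p 0 = p.
Proof.
by apply: functional_extensionality_dep => i; rewrite /leaf_shift if_same scale0r addr0.
Qed.

Lemma Dist_leaf_shift p c c' :
  Dist alpha (leaf_shift p c) (leaf_shift p c') = `|c - c'|.
Proof.
rewrite Dist_same_tail ?tail_leaf_shift // /leaf_shift eqxx opprD addrACA subrr add0r.
by rewrite -scalerBl enormZ enorm_first_unit ?mulr1.
Qed.

Lemma Dist_leaf_shiftr p c : Dist alpha p (leaf_shift p c) = `|c|.
Proof. by rewrite -{1}(leaf_shift0 p) Dist_leaf_shift sub0r normrN. Qed.

Section LeafImages.
Variables (F : point -> point) (G : Ypt R r ns -> Ypt R r ns).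
Variable H : 'rV[R]_(ns 0) -> Ypt R r ns -> 'rV[R]_(ns 0).
Variables (K C : R).
Hypothesis F_block0 : forall p, F p block0 = H (p block0) (tail p).
Hypothesis F_tail : forall p, tail (F p) = G (tail p).
Hypothesis H_qsim : forall y,
  quasisimilarity (fun u v : 'rV[R]_(ns 0) => enorm (u - v)) K C (fun x => H x y).

Lemma Dist_image_leaf_shift p c :
  C / K * `|c| <= Dist alpha (F p) (F (leaf_shift p c)) <= C * K * `|c|.
Proof.
rewrite Dist_same_tail; last by rewrite !F_tail tail_leaf_shift.
rewrite !F_block0 tail_leaf_shift /leaf_shift eqxx.
have [_ /(_ (p block0) (p block0 + c *: first_unit R (ns 0))) [lb ub]] := H_qsim (tail p).
move: lb ub; rewrite opprD addNKr enormN enormZ enorm_first_unit // mulr1.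
by move=> -> ->.
Qed.

Lemma image_rich_leaves p q s : 0 < s -> exists2 w, w <> q &
  Dist alpha p w = s /\ C / K * s <= Dist alpha (F p) (F w) <= C * K * s.
Proof.
move=> s_gt0.
have shifts_neq : leaf_shift p s <> leaf_shift p (- s).
  move=> shifts_eq; have := Dist_leaf_shift p s (- s).
  rewrite shifts_eq Dist_xx opprK gtr0_norm ?addr_gt0 //; lra.
have [c c_norm c_q] : exists2 c, `|c| = s & leaf_shift p c <> q.
  have [sq|sq] := pselect (leaf_shift p s = q); last by exists s; rewrite ?gtr0_norm.
  by exists (- s); rewrite ?normrN ?gtr0_norm // -sq => /esym.
exists (leaf_shift p c) => //; rewrite Dist_leaf_shiftr c_norm; split=> //.
by rewrite -c_norm Dist_image_leaf_shift.
Qed.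

End LeafImages.

End HorizontalLeaves.

Theorem lemma4p7 (R : realType) (r : nat) (ns : nat -> nat) (alpha : nat -> R)
  (hr : (2 <= r)%N)
  (hns : forall i, (i < r)%N -> (1 <= ns i)%N)
  (halpha0 : 0 < alpha 0%N)
  (halpha : forall i j, (i < j)%N -> (j < r)%N -> alpha i < alpha j)
  (eta : R -> R) (heta : homeo_halfline eta)
  (F : Pt R r ns -> Pt R r ns)
  (hFh : dhomeo (Dist alpha) F)
  (hFq : quasisymmetric (Dist alpha) eta F)
  (H : 'rV[R]_(ns 0%N) -> Ypt R r ns -> 'rV[R]_(ns 0%N))
  (G : Ypt R r ns -> Ypt R r ns)
  (hFH : forall p : Pt R r ns,
     F p (Ordinal (ltnW hr)) = H (p (Ordinal (ltnW hr))) (tail p))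
  (hFG : forall p : Pt R r ns, tail (F p) = G (tail p))
  (K C : R) (hK : 1 <= K) (hC : 0 < C)
  (hG : quasisimilarity (DistY alpha) K C G)
  (hH : forall y : Ypt R r ns,
     quasisimilarity (fun u v : 'rV[R]_(ns 0%N) => enorm (u - v)) K C (fun x => H x y))
  (t1 : R) (ht1 : 0 <= t1) (hetat1 : eta t1 = 1) :
  quasisimilarity (Dist alpha) (eta 1 / t1 * K) C F.
Proof.
have alpha_gt0 : forall i : 'I_r, 0 < alpha i.
  by case=> [[|k] k_lt] //; apply: lt_trans halpha0 (halpha 0%N k.+1 _ k_lt).
have [g [Fg gF _ _]] := hFh.
apply: (quasisimilarity_of_rich_leaves (Dist_xx (ltnW hr) alpha_gt0)
  (@Dist_gt0 _ _ _ alpha) hFq (lt_le_trans ltr01 hK) hC _ heta (Bijective Fg gF) ht1 hetat1).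
move=> p q s s_gt0; exact: (image_rich_leaves alpha_gt0 (hns 0%N (ltnW hr)) hFH hFG hH p q s_gt0).
Qed.
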